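(* Let $\mathcal V$ be a congruence modular variety, $\mathbb A\in\mathcal V$, $n\ge2$, $\delta\in\mathrm{Con}(\mathbb A)$ and $l\in n$. If $R\le\mathbb A^{2^n}$ is an $(n)$-dimensional tolerance of $\mathbb A$ that has $\delta$-centrality, then $R^{\circ_l}$ is also an $(n)$-dimensional tolerance of $\mathbb A$ that has $\delta$-centrality.
   Context: Cube notation. $n=\{0,\dots,n-1\}$, $2=\{0,1\}$; $2^n$ is the set of functions $n\to2$, $\mathbf 1$ the constant function $1$. An $(n)$-cube over $A$ is $\gamma\in A^{2^n}$. For $i\in n$, $j\in 2$: $\mathrm{face}_i^j(\gamma)\in A^{2^{n\setminus\{i\}}}$ is $g\mapsto\gamma_{g\cup\{(i,j)\}}$; $\mathrm{glue}_{\{i\}}(\zeta,\eta)$ is the unique cube with $\mathrm{face}_i^0=\zeta$, $\mathrm{face}_i^1=\eta$; $\mathrm{refl}_i^j(\gamma)=\mathrm{glue}_{\{i\}}(\mathrm{face}_i^j\gamma,\mathrm{face}_i^j\gamma)$; $\mathrm{sym}_i(\gamma)=\mathrm{glue}_{\{i\}}(\mathrm{face}_i^1\gamma,\mathrm{face}_i^0\gamma)$. A subuniverse $R$ of $\mathbb A^{2^n}$ is an $(n)$-dimensional tolerance of $\mathbb A$ if $\mathrm{refl}_i^j(\gamma),\mathrm{sym}_i(\gamma)\in R$ for all $\gamma\in R$, $i\in n$, $j\in2$. $R^{\circ_l}$ is the set of all $\gamma\in A^{2^n}$ for which there are $s\ge2$ and $\mu_0,\dots,\mu_{s-1}\in A^{2^{n\setminus\{l\}}}$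 with $\mathrm{face}_l^0(\gamma)=\mu_0$, $\mathrm{face}_l^1(\gamma)=\mu_{s-1}$ and $\mathrm{glue}_{\{l\}}(\mu_r,\mu_{r+1})\in R$ for all $r<s-1$. Lines and centrality. For $i\in n$, $f\in 2^{n\setminus\{i\}}$, the $(i)$-cross-section line of $\gamma$ at $f$ is $(\gamma_{f\cup\{(i,0)\}},\gamma_{f\cup\{(i,1)\}})$; for $f=\mathbf1$ it is the $(i)$-pivot line, for $f\neq\mathbf 1$ an $(i)$-supporting line. $R$ has $(\delta,i)$-centrality if for every $\gamma\in R$ all of whose $(i)$-supporting lines lie in $\delta$, the $(i)$-pivot line of $\gamma$ lies in $\delta$; $R$ has $\delta$-centrality if it has $(\delta,i)$-centrality for all $i\in n$. *)

From mathcomp Require Import all_boot.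
From Stdlib Require Import Relations.
Unset Printing Implicit Defensive.

Record signature := Signature { op_sym : Type; arity : op_sym -> nat }.

Record algebra (S : signature) := Algebra {
  carrier :> Type;
  interp : forall f : op_sym S, ('I_(arity S f) -> carrier) -> carrier }.
Arguments carrier {S}.
Arguments interp {S}.

Inductive term (S : signature) (X : Type) : Type :=
  | tvar : X -> term S X
  | tapp : forall f : op_sym S, ('I_(arity S f) -> term S X) -> term S X.
Arguments tvar {S X}.
Arguments tapp {S X}.

Fixpoint eval_term {S : signature} (A : algebra S) {X : Type} (v : X -> A)
    (t : term S X) : A :=
  match t with
  | tvar x => v x
  | tapp f args => interp A f (fun k => eval_term A v (args k))
  end.

Definition models {S : signature} (Sigma : term S nat -> term S nat -> Prop)
    (A : algebra S) : Prop :=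
  forall s t, Sigma s t -> forall v : nat -> A, eval_term A v s = eval_term A v t.

Definition is_congruence {S : signature} (A : algebra S) (theta : A -> A -> Prop)
    : Prop :=
  equivalence A theta /\
  forall (f : op_sym S) (a b : 'I_(arity S f) -> A),
    (forall k, theta (a k) (b k)) -> theta (interp A f a) (interp A f b).

Definition con_join {A : Type} (a b : A -> A -> Prop) : A -> A -> Prop :=
  clos_trans A (fun x y => a x y \/ b x y).

Definition con_meet {A : Type} (a b : A -> A -> Prop) : A -> A -> Prop :=
  fun x y => a x y /\ b x y.

Definition con_modular {S : signature} (A : algebra S) : Prop :=
  forall alpha beta gamma : A -> A -> Prop,
    is_congruence A alpha -> is_congruence A beta -> is_congruence A gamma ->
    (forall x y, alpha x y -> gamma x y) ->
    forall x y, con_meet (con_join alpha beta) gamma x y ->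
                con_join alpha (con_meet beta gamma) x y.

Definition cm_variety {S : signature} (Sigma : term S nat -> term S nat -> Prop)
    : Prop :=
  forall B : algebra S, models Sigma B -> con_modular B.

(** [2^n] is [{ffun 'I_n -> bool}]; an (n)-cube over A is a map [2^n -> A]. *)
Definition cube (A : Type) (n : nat) := {ffun 'I_n -> bool} -> A.

Definition idx_minus {n : nat} (i : 'I_n) := {x : 'I_n | x != i}.
Definition cube_minus (A : Type) {n : nat} (i : 'I_n) :=
  {ffun idx_minus i -> bool} -> A.

(** [g \cup {(i,j)}] for [g : 2^(n\{i})]. *)
Definition ext {n : nat} (i : 'I_n) (j : bool) (g : {ffun idx_minus i -> bool})
    : {ffun 'I_n -> bool} :=
  [ffun x => if @insub _ (fun y => y != i) (idx_minus i) x is Some y then g y else j].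

Definition restr {n : nat} (i : 'I_n) (g : {ffun 'I_n -> bool})
    : {ffun idx_minus i -> bool} :=
  [ffun y : idx_minus i => g (val y)].

Definition face {A : Type} {n : nat} (i : 'I_n) (j : bool) (gam : cube A n)
    : cube_minus A i := fun g => gam (ext i j g).

Definition glue {A : Type} {n : nat} (i : 'I_n) (zeta eta : cube_minus A i)
    : cube A n := fun g => if g i then eta (restr i g) else zeta (restr i g).

Definition refl_cube {A : Type} {n : nat} (i : 'I_n) (j : bool) (gam : cube A n)
    : cube A n := glue i (face i j gam) (face i j gam).

Definition sym_cube {A : Type} {n : nat} (i : 'I_n) (gam : cube A n) : cube A n :=
  glue i (face i true gam) (face i false gam).

Definition subuniverse_pow {S : signature} (A : algebra S) {n : nat}
    (R : cube A n -> Prop) : Prop :=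
  forall (f : op_sym S) (args : 'I_(arity S f) -> cube A n),
    (forall k, R (args k)) -> R (fun g => interp A f (fun k => args k g)).

Definition tolerance {S : signature} (A : algebra S) {n : nat}
    (R : cube A n -> Prop) : Prop :=
  subuniverse_pow A R /\
  forall gam, R gam ->
    forall (i : 'I_n), (forall j : bool, R (refl_cube i j gam)) /\ R (sym_cube i gam).

Definition compose_l {A : Type} {n : nat} (l : 'I_n) (R : cube A n -> Prop)
    : cube A n -> Prop :=
  fun gam => exists (s : nat) (mu : nat -> cube_minus A l),
    2 <= s /\ face l false gam = mu 0 /\ face l true gam = mu s.-1 /\
    forall r, r < s.-1 -> R (glue l (mu r) (mu r.+1)).

Definition line_in {A : Type} {n : nat} (delta : A -> A -> Prop) (gam : cube A n)
    (i : 'I_n) (f : {ffun idx_minus i -> bool}) : Prop :=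
  delta (gam (ext i false f)) (gam (ext i true f)).

Definition centrality_i {A : Type} {n : nat} (delta : A -> A -> Prop)
    (R : cube A n -> Prop) (i : 'I_n) : Prop :=
  forall gam, R gam ->
    (forall f : {ffun idx_minus i -> bool}, f != [ffun => true] -> line_in delta gam i f) ->
    line_in delta gam i [ffun => true].

Definition centrality {A : Type} {n : nat} (delta : A -> A -> Prop)
    (R : cube A n -> Prop) : Prop :=
  forall i : 'I_n, centrality_i delta R i.

From Stdlib Require Import Relations FunctionalExtensionality ProofIrrelevance
  IndefiniteDescription.
From mathcomp Require Import all_boot zify.

Set Implicit Arguments.
Unset Strict Implicit.
Unset Printing Implicit Defensive.

Definition upd {n : nat} (g : {ffun 'I_n -> bool}) (i : 'I_n) (b : bool)
  : {ffun 'I_n -> bool} := [ffun x => if x == i then b else g x].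

Notation one := [ffun => true].

Section CubeCombinatorics.

Variable n : nat.
Implicit Types (g : {ffun 'I_n -> bool}) (i l : 'I_n).

Lemma upd_at g i b : upd g i b i = b.
Proof. by rewrite ffunE eqxx. Qed.

Lemma upd_ne g i b x : x != i -> upd g i b x = g x.
Proof. by rewrite ffunE => /negPf ->. Qed.

Lemma upd_comm g i l a b : i != l -> upd (upd g i a) l b = upd (upd g l b) i a.
Proof.
move=> Hil; apply/ffunP => x; rewrite !ffunE.
by case: (eqVneq x i) => [->|//]; rewrite (negPf Hil).
Qed.

Lemma upd_upd g i a b : upd (upd g i a) i b = upd g i b.
Proof. by apply/ffunP => x; rewrite !ffunE; case: (x == i). Qed.

Lemma upd_over g i l a b c : i != l -> upd (upd (upd g l b) i a) l c = upd (upd g i a) l c.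
Proof. by move=> Hil; rewrite (upd_comm _ _ _ Hil) upd_upd -(upd_comm _ _ _ Hil). Qed.

Lemma upd_id g i b : g i = b -> upd g i b = g.
Proof. by move=> <-; apply/ffunP => x; rewrite !ffunE; case: eqP => [->|]. Qed.

Lemma ext_val i b f x (Hx : x != i) : ext i b f x = f (exist _ x Hx).
Proof. by rewrite ffunE insubT. Qed.

Lemma ext_at i b f : ext i b f i = b.
Proof. by rewrite ffunE insubN // negbK. Qed.

Lemma restr_ext i b f : restr i (ext i b f) = f.
Proof. by apply/ffunP => -[x Hx]; rewrite ffunE /= ext_val. Qed.

Lemma ext_restr_upd i b g : ext i b (restr i g) = upd g i b.
Proof.
apply/ffunP => x; rewrite !ffunE; case: insubP => [y Hy Hv|].
  by rewrite ffunE Hv (negPf Hy).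
by rewrite negbK => ->.
Qed.

Lemma ext_restr i g : ext i (g i) (restr i g) = g.
Proof. by rewrite ext_restr_upd upd_id. Qed.

Lemma restr_one i : restr i one = one.
Proof. by apply/ffunP => y; rewrite !ffunE. Qed.

Lemma upd_one_id i j b : j != i -> upd (upd one i b) j true = upd one i b.
Proof. by move=> Hji; rewrite upd_id // upd_ne // ffunE. Qed.

Lemma restr_neq_one i g x : x != i -> g x = false -> restr i g != one.
Proof. by move=> Hx Hgx; apply/eqP => /ffunP /(_ (exist _ x Hx)); rewrite !ffunE Hgx. Qed.

Lemma restr_upd_eq l i g g' b :
  restr l g = restr l g' -> restr l (upd g i b) = restr l (upd g' i b).
Proof.
move=> E; apply/ffunP => y; rewrite !ffunE.
by case: eqP => // _; move/ffunP: E => /(_ y); rewrite !ffunE.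
Qed.

Variable A : Type.
Implicit Types (gam : cube A n).

Lemma glue_ext l (a b : cube_minus A l) j f :
  glue l a b (ext l j f) = if j then b f else a f.
Proof. by rewrite /glue ext_at restr_ext. Qed.

Lemma face_glue l (a b : cube_minus A l) j :
  face l j (glue l a b) = if j then b else a.
Proof. by apply: functional_extensionality => f; rewrite /face glue_ext; case: j. Qed.

Lemma refl_glue l (a b : cube_minus A l) j :
  refl_cube l j (glue l a b) = if j then glue l b b else glue l a a.
Proof. by rewrite /refl_cube face_glue; case: j. Qed.

Lemma sym_glue l (a b : cube_minus A l) : sym_cube l (glue l a b) = glue l b a.
Proof. by rewrite /sym_cube !face_glue. Qed.

Lemma refl_eval i j gam : refl_cube i j gam = fun g => gam (upd g i j).
Proof.
apply: functional_extensionality => g.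
by rewrite /refl_cube /glue /face ext_restr_upd; case: (g i).
Qed.

Lemma sym_eval i gam : sym_cube i gam = fun g => gam (upd g i (~~ g i)).
Proof.
apply: functional_extensionality => g.
by rewrite /sym_cube /glue /face !ext_restr_upd; case: (g i).
Qed.

Lemma line_upd (delta : A -> A -> Prop) i gam g :
  line_in delta gam i (restr i g) = delta (gam (upd g i false)) (gam (upd g i true)).
Proof. by rewrite /line_in !ext_restr_upd. Qed.

Lemma line_faces (delta : A -> A -> Prop) l gam f :
  line_in delta gam l f = delta (face l false gam f) (face l true gam f).
Proof. by []. Qed.

End CubeCombinatorics.

Inductive term_op {S : signature} (A : algebra S) (I : Type) : ((I -> A) -> A) -> Prop :=
  | term_op_var (k : I) : @term_op S A I (fun v => v k)
  | term_op_app (f : op_sym S) (args : 'I_(arity S f) -> (I -> A) -> A) :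
      (forall j, @term_op S A I (args j)) ->
      @term_op S A I (fun v => interp A f (fun j => args j v)).
Arguments term_op {S} A {I}.
Arguments term_op_var {S A I} k.
Arguments term_op_app {S A I f args}.

Section TermOperations.

Variables (S : signature) (A : algebra S) (I : Type).

Definition term_op_alg : algebra S :=
  Algebra S {w : (I -> A) -> A | term_op A w}
    (fun f args => exist _ (fun v => interp A f (fun j => proj1_sig (args j) v))
       (term_op_app (fun j => proj2_sig (args j)))).

Lemma eval_term_op_alg (v : nat -> term_op_alg) (t : term S nat) :
  proj1_sig (eval_term term_op_alg v t) = fun e => eval_term A (fun k => proj1_sig (v k) e) t.
Proof.
elim: t => [//|f args IH] /=; apply: functional_extensionality => e /=.
by congr interp; apply: functional_extensionality => j; rewrite IH.
Qed.

Lemma term_op_alg_models (Sigma : term S nat -> term S nat -> Prop) :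
  models Sigma A -> models Sigma term_op_alg.
Proof.
move=> HA s t Hst v; apply: eq_sig_hprop; first by move=> ? ? ?; apply: proof_irrelevance.
rewrite !eval_term_op_alg; apply: functional_extensionality => e; exact: HA.
Qed.

Lemma term_op_compat (delta : A -> A -> Prop) : is_congruence A delta ->
  forall w, term_op A w -> forall v v' : I -> A,
  (forall k, delta (v k) (v' k)) -> delta (w v) (w v').
Proof. by move=> [_ Hc] w; elim=> [//|f args _ IH] v v' H; apply: Hc => j; apply: IH. Qed.

Lemma term_op_closed n (R : cube A n -> Prop) : subuniverse_pow A R ->
  forall w, term_op A w -> forall X : I -> cube A n,
  (forall k, R (X k)) -> R (fun g => w (fun k => X k g)).
Proof.
move=> HR w; elim=> [//|f args _ IH] X HX.
exact: (HR f (fun j g => args j (fun k => X k g)) (fun j => IH j X HX)).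
Qed.

Definition agree_on (T : Type) (pat : T -> I -> A) (x y : term_op_alg) : Prop :=
  forall t, proj1_sig x (pat t) = proj1_sig y (pat t).

Lemma agree_on_congruence (T : Type) (pat : T -> I -> A) :
  is_congruence term_op_alg (agree_on pat).
Proof.
split; first split.
- by move=> x t.
- by move=> x y z Hxy Hyz t; rewrite Hxy Hyz.
- by move=> x y Hxy t; rewrite Hxy.
- move=> f a b Hab t /=; congr interp.
  by apply: functional_extensionality => j; exact: Hab.
Qed.

End TermOperations.

Definition vec4 {T : Type} (a b c d : T) : 'I_4 -> T :=
  fun k => match nat_of_ord k with 0 => a | 1 => b | 2 => c | _ => d end.

Lemma vec4_forall (T : Type) (P : T -> Prop) a b c d :
  P a -> P b -> P c -> P d -> forall k, P (vec4 a b c d k).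
Proof. by move=> Pa Pb Pc Pd [[|[|[|[|?]]]] ?]. Qed.

Lemma vec4_app (T U : Type) (X1 X2 X3 X4 : T -> U) g :
  (fun k => vec4 X1 X2 X3 X4 k g) = vec4 (X1 g) (X2 g) (X3 g) (X4 g).
Proof. by apply: functional_extensionality => -[[|[|[|[|?]]]] ?]. Qed.

Definition day_like {T : Type} (w : ('I_4 -> T) -> T) : Prop :=
  forall a b, w (vec4 a b b a) = a.

Lemma clos_trans_invariant (T : Type) (step : T -> T -> Prop) (P : T -> Prop) :
  (forall x y, step x y -> P x -> P y) ->
  forall x y, clos_trans T step x y -> P x -> P y.
Proof. by move=> Hstep x y; elim=> [u v /Hstep|u v w _ IH1 _ IH2] // /IH1 /IH2. Qed.

Section DayCriterion.

Variables (S : signature) (Sigma : term S nat -> term S nat -> Prop).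
Hypothesis HV : cm_variety Sigma.
Variables (A : algebra S) (delta : A -> A -> Prop).
Hypotheses (HA : models Sigma A) (Hdelta : is_congruence A delta).

Lemma term_op_compat4 w : term_op A w -> forall a b c d a' b' c' d',
  delta a a' -> delta b b' -> delta c c' -> delta d d' ->
  delta (w (vec4 a b c d)) (w (vec4 a' b' c' d')).
Proof.
move=> Hw a b c d a' b' c' d' Ha Hb Hc Hd.
by apply: (term_op_compat Hdelta Hw) => -[[|[|[|[|?]]]] ?].
Qed.

(* In the algebra F of 4-ary term operations put
   alpha = ker(x,y,y,z), beta = ker(x,x,z,z), gamma = ker(x,y,y,x); the
   projections e0, e3 satisfy (e0,e3) in (alpha \/ beta) /\ gamma, so by
   modularity they are joined by an alpha \/ (beta /\ gamma)-path, along
   which "day_like and p delta w(p,p,r,r)" is invariant. *)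
Lemma day_criterion (p q r : A) :
  (forall w, term_op A w -> day_like w ->
     delta (w (vec4 p p r r)) (w (vec4 p q q r))) -> delta p r.
Proof.
move=> Hday; have [[drefl dtrans dsym] _] := Hdelta.
pose F := term_op_alg A 'I_4.
pose alpha := agree_on (fun t : A * A * A => vec4 t.1.1 t.1.2 t.1.2 t.2).
pose beta := agree_on (fun t : A * A => vec4 t.1 t.1 t.2 t.2).
pose gamma := agree_on (fun t : A * A => vec4 t.1 t.2 t.2 t.1).
pose e k : F := exist _ (fun v => v k) (term_op_var k).
pose e0 := e (@Ordinal 4 0 isT); pose e1 := e (@Ordinal 4 1 isT).
pose e2 := e (@Ordinal 4 2 isT); pose e3 := e (@Ordinal 4 3 isT).
have Hjoin : con_join alpha beta e0 e3.
  apply: t_trans (t_step _ _ _ _ (or_intror (_ : beta e2 e3))) => //.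
  apply: t_trans (t_step _ _ _ _ (or_introl (_ : alpha e1 e2))) => //.
  by apply: t_step; right.
have Hgamma : gamma e0 e3 by [].
have Hpath := HV (term_op_alg_models (I := 'I_4) HA) (agree_on_congruence _)
  (agree_on_congruence _) (agree_on_congruence _)
  (fun x y H t => H (t.1, t.2, t.1)) (conj Hjoin Hgamma).
pose P (x : F) := day_like (proj1_sig x) /\ delta p (proj1_sig x (vec4 p p r r)).
have HP0 : P e0 by split; last exact: drefl.
have [_ //] : P e3.
apply: clos_trans_invariant Hpath HP0 => x y [Hxy|[Hxy Hg]] [Dx Hx].
- have Dy : day_like (proj1_sig y) by move=> a b; rewrite -(Hxy (a, b, a)).
  split=> //; apply: (dtrans _ _ _ Hx); apply: (dtrans _ _ _ (Hday _ (proj2_sig x) Dx)).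
  by rewrite (Hxy (p, q, r)); apply: dsym; exact: Hday (proj2_sig y) Dy.
- by split; [move=> a b; rewrite -(Hg (a, b)) | rewrite -(Hxy (p, r))].
Qed.

End DayCriterion.

Section Chains.

Variables (S : signature) (A : algebra S) (n : nat) (l : 'I_n).
Variable R : cube A n -> Prop.

Definition composed (s : nat) (gam : cube A n) : Prop :=
  exists mu : nat -> cube_minus A l,
    [/\ face l false gam = mu 0, face l true gam = mu s.-1 &
        forall r, r < s.-1 -> R (glue l (mu r) (mu r.+1))].

Lemma compose_lP gam : compose_l l R gam <-> exists2 s, 2 <= s & composed s gam.
Proof.
split; first by case=> s [mu [Hs [H0 [H1 Hmu]]]]; exists s => //; exists mu.
by case=> s Hs [mu [H0 H1 Hmu]]; exists s, mu.
Qed.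

Lemma composed_glue2 a b : R (glue l a b) -> composed 2 (glue l a b).
Proof.
move=> Hab; exists (fun r => if r is 0 then a else b).
by rewrite !face_glue; split=> // -[].
Qed.

(* Each level of the composition is a subuniverse: chains are combined
   entrywise. *)
Lemma composed_subuniverse s : subuniverse_pow A R -> subuniverse_pow A (composed s).
Proof.
move=> HR f args Hargs.
have [mu Hmu] : exists mu : _ -> nat -> cube_minus A l, forall k,
    [/\ face l false (args k) = mu k 0, face l true (args k) = mu k s.-1 &
        forall r, r < s.-1 -> R (glue l (mu k r) (mu k r.+1))].
  exact: functional_choice Hargs.
exists (fun r h => interp A f (fun k => mu k r h)); split.
- apply: functional_extensionality => h; rewrite /face; congr interp.
  by apply: functional_extensionality => k; have [E _ _] := Hmu k; exact: equal_f E h.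
- apply: functional_extensionality => h; rewrite /face; congr interp.
  by apply: functional_extensionality => k; have [_ E _] := Hmu k; exact: equal_f E h.
- move=> r Hr; have -> : glue l (fun h => interp A f (fun k => mu k r h))
      (fun h => interp A f (fun k => mu k r.+1 h)) =
      fun g => interp A f (fun k => glue l (mu k r) (mu k r.+1) g).
    by apply: functional_extensionality => g; rewrite /glue; case: (g l).
  by apply: HR => k; have [_ _ Hk] := Hmu k; exact: Hk.
Qed.

Hypothesis Hrefl1 : forall c, R c -> R (refl_cube l true c).

(* A chain can be lengthened by repeating its last entry. *)
Lemma composed_mono s s' gam : 2 <= s -> s <= s' -> composed s gam -> composed s' gam.
Proof.
move=> Hs Hss' [mu [H0 H1 Hmu]].
exists (fun r => mu (minn r s.-1)); split.
- by rewrite H0 /minn; case: ifP => //; lia.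
- by rewrite H1; congr mu; lia.
- move=> r Hr /=; case: (ltnP r s.-1) => Hrs.
    have -> : minn r.+1 s.-1 = r.+1 by lia.
    exact: Hmu.
  have -> : minn r.+1 s.-1 = s.-1 by lia.
  have := Hmu s.-2 ltac:(lia); have -> : s.-2.+1 = s.-1 by lia.
  by move/Hrefl1; rewrite refl_glue.
Qed.

Lemma composed_of_R s a b : 2 <= s -> R (glue l a b) -> composed s (glue l a b).
Proof. by move=> Hs /composed_glue2; apply: composed_mono. Qed.

Lemma composed_precomp s (phi : {ffun 'I_n -> bool} -> {ffun 'I_n -> bool}) gam :
  (forall g, phi g l = g l) ->
  (forall g g', restr l g = restr l g' -> restr l (phi g) = restr l (phi g')) ->
  (forall c, R c -> R (fun g => c (phi g))) ->
  composed s gam -> composed s (fun g => gam (phi g)).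
Proof.
move=> Hphil Hphir HR [mu [H0 H1 Hmu]].
pose phi' h := restr l (phi (ext l false h)).
have Hext b h : phi (ext l b h) = ext l b (phi' h).
  rewrite -(ext_restr l (phi (ext l b h))) Hphil ext_at.
  by congr ext; apply: Hphir; rewrite !restr_ext.
exists (fun r h => mu r (phi' h)); split.
- by apply: functional_extensionality => h; rewrite /face Hext -H0.
- by apply: functional_extensionality => h; rewrite /face Hext -H1.
- move=> r Hr; have -> : glue l (fun h => mu r (phi' h)) (fun h => mu r.+1 (phi' h)) =
      fun g => glue l (mu r) (mu r.+1) (phi g).
    apply: functional_extensionality => g.
    by rewrite -{2}(ext_restr l g) Hext glue_ext /glue; case: (g l).
  exact: HR (Hmu r Hr).
Qed.

End Chains.

Section ComposeTolerance.

Variables (S : signature) (A : algebra S) (n : nat) (l : 'I_n).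
Variable R : cube A n -> Prop.
Hypothesis HR : tolerance A R.

Let Hsub : subuniverse_pow A R := proj1 HR.

Lemma tolerance_refl l' j c : R c -> R (refl_cube l' j c).
Proof. by move=> Hc; have [/(_ j) ? _] := proj2 HR c Hc l'. Qed.

Lemma tolerance_sym l' c : R c -> R (sym_cube l' c).
Proof. by move=> Hc; have [_ ?] := proj2 HR c Hc l'. Qed.

(* Arguments of an operation are lengthened to a common chain length. *)
Lemma compose_subuniverse : subuniverse_pow A (compose_l l R).
Proof.
move=> f args Hargs.
have Hlen k : exists m, 2 <= m /\ composed l R m (args k).
  by have /compose_lP [m Hm Hk] := Hargs k; exists m.
have [s Hs] := functional_choice _ Hlen.
pose m := maxn 2 (\max_(k < arity S f) s k).
apply/compose_lP; exists m; first exact: leq_maxl.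
apply: (composed_subuniverse (s := m) Hsub) => k; have [Hs2 Hk] := Hs k.
apply: composed_mono Hk => //; first exact: tolerance_refl.
by apply: leq_trans (leq_maxr _ _); exact: (leq_bigmax k).
Qed.

(* In direction l, reflections are single links and the symmetry reverses
   the chain. *)
Lemma compose_refl_sym_l gam : compose_l l R gam ->
  (forall j, compose_l l R (refl_cube l j gam)) /\ compose_l l R (sym_cube l gam).
Proof.
case/compose_lP=> s Hs [mu [H0 H1 Hmu]]; split.
- move=> j; apply/compose_lP; exists 2 => //; apply: composed_glue2.
  case: j; [rewrite H1 | rewrite H0].
    have := Hmu s.-2 ltac:(lia); have -> : s.-2.+1 = s.-1 by lia.
    by move/(tolerance_refl l true); rewrite refl_glue.
  by move: (Hmu 0 ltac:(lia)) => /(tolerance_refl l false); rewrite refl_glue.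
- apply/compose_lP; exists s => //; exists (fun r => mu (s.-1 - r)).
  rewrite /sym_cube !face_glue H0 H1 subn0 subnn; split=> // r Hr.
  have := Hmu (s.-1 - r.+1) ltac:(lia); have -> : (s.-1 - r.+1).+1 = s.-1 - r by lia.
  by move/(tolerance_sym l); rewrite sym_glue.
Qed.

(* In a direction i <> l, reflections and the symmetry act on coordinates
   other than l, so they transport chains link by link. *)
Lemma compose_refl_sym_other i gam : i != l -> compose_l l R gam ->
  (forall j, compose_l l R (refl_cube i j gam)) /\ compose_l l R (sym_cube i gam).
Proof.
move=> Hil /compose_lP [s Hs Hgam].
split=> [j|]; apply/compose_lP; exists s => //.
- rewrite refl_eval; apply: composed_precomp Hgam.
  + by move=> g; rewrite upd_ne // eq_sym.
  + by move=> g g' E; apply: restr_upd_eq.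
  + by move=> c /(tolerance_refl i j); rewrite refl_eval.
- rewrite sym_eval; apply: composed_precomp Hgam.
  + by move=> g; rewrite upd_ne // eq_sym.
  + move=> g g' E; have -> : g i = g' i.
      by move/ffunP: E => /(_ (exist _ i Hil)); rewrite !ffunE.
    exact: restr_upd_eq.
  + by move=> c /(tolerance_sym i); rewrite sym_eval.
Qed.

Lemma compose_tolerance : tolerance A (compose_l l R).
Proof.
split; first exact: compose_subuniverse.
move=> gam Hgam i; case: (eqVneq i l) => [->|Hil].
  exact: compose_refl_sym_l.
exact: compose_refl_sym_other.
Qed.

End ComposeTolerance.

Section Centrality.

Variables (S : signature) (Sigma : term S nat -> term S nat -> Prop).
Hypothesis HV : cm_variety Sigma.
Variables (A : algebra S) (delta : A -> A -> Prop).
Hypotheses (HA : models Sigma A) (Hdelta : is_congruence A delta).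
Variable n : nat.

Let delta_trans : forall x y z, delta x y -> delta y z -> delta x z.
Proof. by case: Hdelta => -[]. Qed.
Let delta_sym : forall x y, delta x y -> delta y x.
Proof. by case: Hdelta => -[]. Qed.
Let delta_refl : forall x, delta x x.
Proof. by case: Hdelta => -[]. Qed.

(* For a day-like w the
   cube w(glue mu mu, glue mu nu, glue rho nu, glue rho rho) lies in Q, its
   l-lines join w(mu,mu,rho,rho) to w(mu,nu,nu,rho), and off the pivot both
   ends are delta-related to mu = w(mu,nu,nu,mu); centrality and the Day
   criterion conclude. *)
Lemma centrality_step (Q : cube A n -> Prop) (l : 'I_n) :
  subuniverse_pow A Q -> centrality_i delta Q l ->
  forall mu nu rho : cube_minus A l,
  Q (glue l mu mu) -> Q (glue l mu nu) -> Q (glue l rho nu) -> Q (glue l rho rho) ->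
  (forall f, f != one -> delta (mu f) (rho f)) -> delta (mu one) (rho one).
Proof.
move=> HQ HcQ mu nu rho Q1 Q2 Q3 Q4 Hoff.
apply: (day_criterion HV HA Hdelta (q := nu one)) => w Hw Hday.
pose X := vec4 (glue l mu mu) (glue l mu nu) (glue l rho nu) (glue l rho rho).
have QM : Q (fun g => w (fun k => X k g)).
  exact: (term_op_closed HQ Hw (vec4_forall (P := Q) Q1 Q2 Q3 Q4)).
have Mext j f : (fun g => w (fun k => X k g)) (ext l j f) =
    w (if j then vec4 (mu f) (nu f) (nu f) (rho f) else vec4 (mu f) (mu f) (rho f) (rho f)).
  by rewrite /= vec4_app !glue_ext; case: j.
have := HcQ _ QM; rewrite /line_in !Mext; apply=> f /Hoff Hf.
rewrite !Mext; apply: (delta_trans (y := mu f)).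
  rewrite -{3}(Hday (mu f) (mu f)).
  by apply: (term_op_compat4 Hdelta Hw (delta_refl _) (delta_refl _)); apply: delta_sym.
rewrite -{1}(Hday (mu f) (nu f)).
exact: (term_op_compat4 Hdelta Hw (delta_refl _) (delta_refl _) (delta_refl _) Hf).
Qed.

(* Every level of the l-composition of a tolerance with (delta,l)-centrality
   has (delta,l)-centrality: a chain mu 0, ..., mu s is handled by
   [centrality_step] with mu := mu 0, nu := mu (s-1), rho := mu s inside the
   shorter level, which is central by induction. *)
Lemma composed_central (l : 'I_n) (R : cube A n -> Prop) :
  tolerance A R -> centrality_i delta R l ->
  forall s, 2 <= s -> centrality_i delta (composed l R s) l.
Proof.
move=> HR Hc; have Hrefl1 := tolerance_refl HR l true.
elim=> [//|s IH] Hs gam [mu [H0 H1 Hmu]] Hoff.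
rewrite line_faces H0 H1 /=.
have {}Hoff f : f != one -> delta (mu 0 f) (mu s f).
  by move=> /Hoff; rewrite line_faces H0 H1.
have Hlast : R (glue l (mu s.-1) (mu s)).
  by have := Hmu s.-1 ltac:(lia); have -> : s.-1.+1 = s by lia.
case: (ltnP s 2) => Hs2.
  have Es : s = 1 by lia.
  subst s; have := Hc _ Hlast; rewrite line_faces !face_glue; apply=> f /Hoff.
  by rewrite line_faces !face_glue.
apply: (centrality_step (composed_subuniverse (s := s) (proj1 HR)) (IH ltac:(lia))
  (nu := mu s.-1)) => //.
- apply: (composed_of_R Hrefl1); first lia.
  by move: (Hmu 0 ltac:(lia)) => /(tolerance_refl HR l false); rewrite refl_glue.
- by exists mu; rewrite !face_glue; split=> // r Hr; apply: Hmu; lia.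
- apply: (composed_of_R Hrefl1); first lia.
  by rewrite -sym_glue; exact: tolerance_sym.
- apply: (composed_of_R Hrefl1); first lia.
  by rewrite -(refl_glue (mu s.-1) (mu s) true); exact: Hrefl1.
Qed.

Lemma compose_central_l (l : 'I_n) (R : cube A n -> Prop) :
  tolerance A R -> centrality_i delta R l -> centrality_i delta (compose_l l R) l.
Proof. by move=> HR Hc gam /compose_lP [s Hs]; exact: composed_central. Qed.

Section OtherDirections.

(* Given
   gam in R with its (i)-supporting lines in delta and a day-like w, the cube
     M = w(refl_i^0 refl_l^1 gam, refl_i^0 sym_l gam, sym_l gam, refl_l^1 gam)
   lies in R, has its (l)-supporting lines in delta, and its (l)-pivot line
   joins w(p,p,r,r) to w(p,q',q,r) with q' delta q, where p, r are the ends of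
   the (i)-pivot line of gam; the Day criterion then gives p delta r. *)

Variables (l i : 'I_n) (R : cube A n -> Prop) (gam : cube A n).
Hypotheses (Hil : i != l) (HR : tolerance A R) (Hgam : R gam).
Hypothesis Hoff : forall (g : {ffun 'I_n -> bool}) x, x != i -> g x = false ->
  delta (gam (upd g i false)) (gam (upd g i true)).
Variable w : ('I_4 -> A) -> A.
Hypotheses (Hw : term_op A w) (Hday : day_like w).

Definition witness : cube A n :=
  fun g => w (fun k => vec4 (refl_cube i false (refl_cube l true gam))
    (refl_cube i false (sym_cube l gam)) (sym_cube l gam) (refl_cube l true gam) k g).

Lemma witness_in : R witness.
Proof.
have [Hsub _] := HR; apply: (term_op_closed Hsub Hw); apply: vec4_forall.
- by apply: tolerance_refl => //; exact: tolerance_refl.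
- by apply: tolerance_refl => //; exact: tolerance_sym.
- exact: tolerance_sym.
- exact: tolerance_refl.
Qed.

Lemma witness_upd g b : witness (upd g l b) =
  w (vec4 (gam (upd (upd g i false) l true)) (gam (upd (upd g i false) l (~~ b)))
          (gam (upd g l (~~ b))) (gam (upd g l true))).
Proof.
rewrite /witness vec4_app !refl_eval !sym_eval /=.
have Hli : l != i by rewrite eq_sym.
by rewrite (upd_ne _ _ Hli) !upd_at !upd_upd !upd_over.
Qed.

(* Off the pivot, some coordinate x <> l is 0, so the (i)-lines of [gam]
   needed to compare both ends of the (l)-line of [witness] with
   w(c,d,d,c) = c are supporting lines, or trivial when the vertex already
   has i-coordinate 0. *)
Lemma witness_off_pivot f : f != one -> line_in delta witness l f.
Proof.
move=> Hf; have [[x Hxl] Hfx] : exists x, f x = false.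
  case: (pickP (fun x => ~~ f x)) => [x /negPf Hfx|Hall]; first by exists x.
  by case/eqP: Hf; apply/ffunP => x; rewrite ffunE; move/negbFE: (Hall x).
set g := ext l true f; rewrite -(restr_ext true f) -/g line_upd !witness_upd /=.
have Hgx : g x = false by rewrite /g ext_val.
have Hi_line b : delta (gam (upd (upd g i false) l b)) (gam (upd g l b)).
  case Hgi: (g i); last by rewrite (upd_id Hgi).
  have Hxi : x != i by apply: contraTneq Hgi => <-; rewrite Hgx.
  rewrite (upd_comm _ _ _ Hil) -{2}(@upd_id _ (upd g l b) i true); last first.
    by rewrite upd_ne.
  by apply: (Hoff Hxi); rewrite upd_ne.
set c := gam (upd (upd g i false) l true).
apply: (delta_trans (y := c)).
  rewrite -{3}(Hday c c).
  by apply: (term_op_compat4 Hdelta Hw (delta_refl _) (delta_refl _));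
    apply: delta_sym; exact: Hi_line.
rewrite -{1}(Hday c (gam (upd (upd g i false) l false))).
exact: (term_op_compat4 Hdelta Hw (delta_refl _) (delta_refl _) (Hi_line _) (Hi_line _)).
Qed.

End OtherDirections.

Lemma central_other_direction (l i : 'I_n) (R : cube A n -> Prop) :
  tolerance A R -> centrality_i delta R l -> i != l -> centrality_i delta R i.
Proof.
move=> HR Hc Hil gam Hgam Hsup.
have Hoff (g : {ffun 'I_n -> bool}) x : x != i -> g x = false ->
    delta (gam (upd g i false)) (gam (upd g i true)).
  by move=> Hx Hgx; rewrite -line_upd; apply: Hsup; exact: restr_neq_one Hx Hgx.
have Hli : l != i by rewrite eq_sym.
rewrite -(restr_one i) line_upd (@upd_id _ one i true) ?ffunE //.
apply: (day_criterion HV HA Hdelta (q := gam (upd (upd one i false) l false))) => w Hw Hday.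
have := Hc _ (witness_in l i HR Hgam Hw) (witness_off_pivot Hil Hoff Hw Hday).
rewrite -(restr_one l) line_upd !(witness_upd gam Hil) /= (upd_one_id false Hli).
rewrite (@upd_id _ one l true) ?ffunE //.
move/delta_trans; apply.
apply: (term_op_compat4 Hdelta Hw (delta_refl _) (delta_refl _) _ (delta_refl _)).
have := Hoff (upd one l false) l Hli (upd_at _ _ _).
by rewrite (upd_one_id false Hil) (upd_comm _ _ _ Hli); apply: delta_sym.
Qed.

End Centrality.

Theorem proposition2p5 (S : signature) (Sigma : term S nat -> term S nat -> Prop)
  (HV : cm_variety Sigma) (A : algebra S) (HA : models Sigma A)
  (n : nat) (Hn : 2 <= n) (delta : A -> A -> Prop) (Hdelta : is_congruence A delta)
  (l : 'I_n) (R : cube A n -> Prop)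
  (HR : tolerance A R) (Hc : centrality delta R) :
  tolerance A (compose_l l R) /\ centrality delta (compose_l l R).
Proof.
have Htol := compose_tolerance l HR.
have Hcl := compose_central_l HV HA Hdelta HR (Hc l).
split=> // i; case: (eqVneq i l) => [-> //|Hil].
exact: (central_other_direction HV HA Hdelta Htol Hcl Hil).
Qed.
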